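(* For even $n\ge4$, let $\bar P_n$ denote the maximum of $\bar P(\mathsf{M}^{(1)},\mathsf{M}^{(2)})$ over all pairs of dichotomic measurements on the regular $n$-gon state space $\mathcal{S}_n$. Then, for every integer $m\ge1$: (i) if $n=4m$ with $m$ odd, $\bar P_n=\frac12\big(1+\frac{\sec(\pi/n)}{\sqrt2}\big)$; (ii) if $n=4m$ with $m$ even, $\bar P_n=\frac12\big(1+\frac{1}{\sqrt2}\big)$; (iii) if $n=4m+2$ with $m$ odd, $\bar P_n=\frac14\big[2+\sec(\pi/n)\cos(m\pi/n)+\sin(m\pi/n)\big]$; (iv) if $n=4m+2$ with $m$ even, $\bar P_n=\frac14\big[2+\cos(m\pi/n)+\sec(\pi/n)\sin(m\pi/n)\big]$.
   Context: The regular $n$-gon state space $\mathcal{S}_n\subset\mathbb{R}^3$ is the convex hull of $s_j=(r_n\cos(2j\pi/n),\,r_n\sin(2j\pi/n),\,1)^T$, $j=1,\ldots,n$, with $r_n=\sqrt{\sec(\pi/n)}$. Effects are linear functionals $e$ on $\mathbb{R}^3$ with $0\le e\le1$ on $\mathcal{S}_n$; unit effect $u=(0,0,1)$; $\|f\|=\max_{s\in\mathcal{S}_n}|f(s)|$. A dichotomic measurement is a pair of effects $\mathsf{M}_+,\mathsf{M}_-$ with $\mathsf{M}_++\mathsf{M}_-=u$, and $\bar P(\mathsf{M}^{(1)},\mathsf{M}^{(2)})=\frac18\sum_{x,y\in\{+,-\}}\|\mathsf{M}^{(1)}_x+\mathsf{M}^{(2)}_y\|$. *)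

From Stdlib Require Import Reals Lra.
From Coquelicot Require Import Coquelicot.
Open Scope R_scope.

(* Points of R^3 and linear functionals on R^3 (given by their coefficients). *)
Definition vec3 := (R * R * R)%type.
Definition func3 := (R * R * R)%type.

Definition app (f : func3) (x : vec3) : R :=
  let '(a, b, c) := f in let '(x1, x2, x3) := x in a * x1 + b * x2 + c * x3.

Definition fadd (f g : func3) : func3 :=
  let '(a, b, c) := f in let '(a', b', c') := g in (a + a', b + b', c + c').

Definition unit_eff : func3 := (0, 0, 1).

Fixpoint sumR (n : nat) (f : nat -> R) : R :=
  match n with O => 0 | S k => sumR k f + f k end.

Definition sec (x : R) : R := / cos x.
Definition r_n (n : nat) : R := sqrt (sec (PI / INR n)).

Definition vertex (n j : nat) : vec3 :=
  (r_n n * cos (2 * INR j * PI / INR n), r_n n * sin (2 * INR j * PI / INR n), 1).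

Definition inS (n : nat) (s : vec3) : Prop :=
  exists lam : nat -> R,
    (forall j, 0 <= lam j) /\
    sumR n (fun k => lam (S k)) = 1 /\
    s = (sumR n (fun k => lam (S k) * fst (fst (vertex n (S k)))),
         sumR n (fun k => lam (S k) * snd (fst (vertex n (S k)))),
         sumR n (fun k => lam (S k) * snd (vertex n (S k)))).

Definition is_effect (n : nat) (e : func3) : Prop :=
  forall s, inS n s -> 0 <= app e s <= 1.

(* ||f|| = max_{s in S_n} |f(s)|  (taken as the supremum, which is attained) *)
Definition fnorm (n : nat) (f : func3) : R :=
  real (Lub_Rbar (fun v => exists s, inS n s /\ v = Rabs (app f s))).

Definition dichotomic (n : nat) (M : func3 * func3) : Prop :=
  is_effect n (fst M) /\ is_effect n (snd M) /\ fadd (fst M) (snd M) = unit_eff.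

Definition Pbar (n : nat) (M1 M2 : func3 * func3) : R :=
  / 8 * (fnorm n (fadd (fst M1) (fst M2)) + fnorm n (fadd (fst M1) (snd M2))
       + fnorm n (fadd (snd M1) (fst M2)) + fnorm n (fadd (snd M1) (snd M2))).

Definition is_Pbar_max (n : nat) (v : R) : Prop :=
  (exists M1 M2, dichotomic n M1 /\ dichotomic n M2 /\ Pbar n M1 M2 = v) /\
  (forall M1 M2, dichotomic n M1 -> dichotomic n M2 -> Pbar n M1 M2 <= v).

From Stdlib Require Import Reals Arith Lra Lia ZArith.
From Coquelicot Require Import Coquelicot.
Open Scope R_scope.

(* At the vertices an effect reads c + (p cos + q sin)/2, and the effect inequalities for M_+
   and M_- = u - M_+ say exactly that (p, q) lies in the polar of the n-gon (n even).  Such a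
   sinusoid is bounded by 1 in vertex directions and by sec(pi/n) halfway between them.  Each
   norm in Pbar is attained at a vertex; pairing the four norms and using the sum-to-product
   formula, the sinusoid values at two vertices 2i, 2j combine into 2 cos((i-j) pi/n) times a
   value in the half-step direction i+j.  This bounds Pbar by 1/2 + g/4, where g is the
   maximum of [gain] over half-step differences; the maximum is reached at m, found using the
   symmetries of [gain] and the monotonicity of sinusoids below their crest.  The bound is
   attained by the two measurements whose sinusoids are the extremal points of the polar in
   the directions of the half-steps m and m + n/2. *)

(** * Vertices and the norm *)

Lemma sumR_ext n f g : (forall k, (k < n)%nat -> f k = g k) -> sumR n f = sumR n g.
Proof.
  induction n as [|n IH]; intros Hfg; cbn [sumR]; [reflexivity|].
  rewrite IH, Hfg; [reflexivity|lia|intros k Hk; apply Hfg; lia].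
Qed.

Lemma sumR_add n f g : sumR n (fun k => f k + g k) = sumR n f + sumR n g.
Proof. induction n as [|n IH]; cbn [sumR]; [|rewrite IH]; ring. Qed.

Lemma sumR_scal n c f : sumR n (fun k => c * f k) = c * sumR n f.
Proof. induction n as [|n IH]; cbn [sumR]; [|rewrite IH]; ring. Qed.

Lemma sumR_le n f g : (forall k, (k < n)%nat -> f k <= g k) -> sumR n f <= sumR n g.
Proof.
  induction n as [|n IH]; intros Hfg; cbn [sumR]; [lra|].
  apply Rplus_le_compat; [apply IH; intros k Hk|]; apply Hfg; lia.
Qed.

Lemma sumR_indicator n j x : (1 <= j <= n)%nat ->
  sumR n (fun k => (if Nat.eqb (S k) j then 1 else 0) * x (S k)) = x j.
Proof.
  induction n as [|n IH]; intros Hj; [lia|]. cbn [sumR].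
  destruct (Nat.eqb_spec (S n) j) as [<-|Hne].
  - rewrite (sumR_ext n _ (fun k => 0 * x (S k))), sumR_scal; [ring|].
    intros k Hk. replace (Nat.eqb (S k) (S n)) with false by (symmetry; apply Nat.eqb_neq; lia).
    reflexivity.
  - rewrite IH by lia. ring.
Qed.

Lemma app_fadd f g x : app (fadd f g) x = app f x + app g x.
Proof. destruct f as [[a b] c], g as [[a' b'] c'], x as [[x y] z]. simpl. ring. Qed.

Lemma inS_vertex n j : (1 <= j <= n)%nat -> inS n (vertex n j).
Proof.
  intros Hj. exists (fun k => if Nat.eqb k j then 1 else 0). repeat split.
  - intros k. destruct (Nat.eqb k j); lra.
  - rewrite (sumR_ext n _ (fun k => (if Nat.eqb (S k) j then 1 else 0) * 1)).
    + exact (sumR_indicator n j (fun _ => 1) Hj).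
    + intros k _. ring.
  - rewrite (sumR_indicator n j (fun k => fst (fst (vertex n k)))),
      (sumR_indicator n j (fun k => snd (fst (vertex n k)))),
      (sumR_indicator n j (fun k => snd (vertex n k))) by exact Hj.
    reflexivity.
Qed.

Lemma app_inS n s : inS n s -> exists lam : nat -> R,
  (forall j, 0 <= lam j) /\ sumR n (fun k => lam (S k)) = 1 /\
  forall f, app f s = sumR n (fun k => lam (S k) * app f (vertex n (S k))).
Proof.
  intros [lam [Hpos [Hsum ->]]]. exists lam. repeat split; [exact Hpos|exact Hsum|].
  intros [[a b] c]. unfold app at 1. rewrite <- !sumR_scal, <- !sumR_add.
  apply sumR_ext. intros k _. unfold vertex, app; simpl. ring.
Qed.

Lemma app_inS_between n f s lo hi : inS n s ->
  (forall j, (1 <= j <= n)%nat -> lo <= app f (vertex n j) <= hi) -> lo <= app f s <= hi.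
Proof.
  intros Hs Hv. destruct (app_inS n s Hs) as [lam [Hpos [Hsum ->]]].
  assert (Hconst : forall c, sumR n (fun k => lam (S k) * c) = c).
  { intros c. rewrite (sumR_ext n _ (fun k => c * lam (S k))), sumR_scal, Hsum by (intros; ring).
    ring. }
  rewrite <- (Hconst lo) at 1. rewrite <- (Hconst hi).
  split; apply sumR_le; intros k Hk; apply Rmult_le_compat_l; try apply Hpos;
    apply Hv; lia.
Qed.

Lemma is_effect_vertices n e :
  is_effect n e <-> forall j, (1 <= j <= n)%nat -> 0 <= app e (vertex n j) <= 1.
Proof.
  split.
  - intros He j Hj. exact (He _ (inS_vertex n j Hj)).
  - intros Hv s Hs. exact (app_inS_between n e s 0 1 Hs Hv).
Qed.

Fixpoint vertex_max (n : nat) (f : func3) (k : nat) : R :=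
  match k with
  | O => 0
  | S k => Rmax (vertex_max n f k) (Rabs (app f (vertex n (S k))))
  end.

Lemma vertex_max_ge n f k j : (1 <= j <= k)%nat ->
  Rabs (app f (vertex n j)) <= vertex_max n f k.
Proof.
  induction k as [|k IH]; intros Hj; [lia|]. cbn [vertex_max].
  destruct (Nat.eq_dec j (S k)) as [->|Hne]; [apply Rmax_r|].
  eapply Rle_trans; [apply IH; lia|apply Rmax_l].
Qed.

Lemma vertex_max_attained n f k : (1 <= k)%nat ->
  exists j, (1 <= j <= k)%nat /\ vertex_max n f k = Rabs (app f (vertex n j)).
Proof.
  induction k as [|k IH]; intros Hk; [lia|]. cbn [vertex_max].
  destruct (Nat.eq_dec k 0) as [->|Hk0].
  - exists 1%nat. split; [lia|]. apply Rmax_right. apply Rabs_pos.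
  - destruct IH as [j [Hj Hmax]]; [lia|]. unfold Rmax. destruct (Rle_dec _ _).
    + exists (S k). split; [lia|reflexivity].
    + exists j. split; [lia|exact Hmax].
Qed.

Lemma fnorm_vertex_max n f : (1 <= n)%nat -> fnorm n f = vertex_max n f n.
Proof.
  intros Hn. unfold fnorm.
  rewrite (is_lub_Rbar_unique _ (Finite (vertex_max n f n))); [reflexivity|]. split.
  - intros v [s [Hs ->]]. simpl. apply Rabs_le, (app_inS_between n f s); [exact Hs|].
    intros j Hj. apply Rabs_le_between, vertex_max_ge, Hj.
  - intros b Hb. destruct (vertex_max_attained n f n Hn) as [j [Hj ->]].
    apply Hb. exists (vertex n j). split; [apply inS_vertex, Hj|reflexivity].
Qed.

Lemma fnorm_ge_vertex n f j : (1 <= j <= n)%nat -> Rabs (app f (vertex n j)) <= fnorm n f.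
Proof. intros Hj. rewrite fnorm_vertex_max by lia. apply vertex_max_ge, Hj. Qed.

Lemma fnorm_attained n f : (1 <= n)%nat ->
  exists j, (1 <= j <= n)%nat /\ fnorm n f = Rabs (app f (vertex n j)).
Proof. intros Hn. rewrite fnorm_vertex_max by exact Hn. apply vertex_max_attained, Hn. Qed.

(** * Sinusoids *)

Lemma cos_period_Z x k : cos (x + 2 * IZR k * PI) = cos x.
Proof.
  destruct (Z.le_ge_cases 0 k) as [Hk|Hk].
  - rewrite <- (Z2Nat.id k Hk), <- INR_IZR_INZ. apply cos_period.
  - rewrite <- (cos_period _ (Z.to_nat (- k))), INR_IZR_INZ, Z2Nat.id, opp_IZR by lia.
    f_equal. ring.
Qed.

Lemma sin_period_Z x k : sin (x + 2 * IZR k * PI) = sin x.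
Proof.
  destruct (Z.le_ge_cases 0 k) as [Hk|Hk].
  - rewrite <- (Z2Nat.id k Hk), <- INR_IZR_INZ. apply sin_period.
  - rewrite <- (sin_period _ (Z.to_nat (- k))), INR_IZR_INZ, Z2Nat.id, opp_IZR by lia.
    f_equal. ring.
Qed.

Lemma Rabs_cos_add_Zpi x k : Rabs (cos (x + IZR k * PI)) = Rabs (cos x).
Proof.
  destruct (Z.Even_or_Odd k) as [[q ->]|[q ->]].
  - rewrite mult_IZR, cos_period_Z. reflexivity.
  - replace (x + IZR (2 * q + 1) * PI) with (x + PI + 2 * IZR q * PI)
      by (rewrite plus_IZR, mult_IZR; ring).
    rewrite cos_period_Z, neg_cos, Rabs_Ropp. reflexivity.
Qed.

Lemma Rabs_sin_add_Zpi x k : Rabs (sin (x + IZR k * PI)) = Rabs (sin x).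
Proof.
  destruct (Z.Even_or_Odd k) as [[q ->]|[q ->]].
  - rewrite mult_IZR, sin_period_Z. reflexivity.
  - replace (x + IZR (2 * q + 1) * PI) with (x + PI + 2 * IZR q * PI)
      by (rewrite plus_IZR, mult_IZR; ring).
    rewrite sin_period_Z, neg_sin, Rabs_Ropp. reflexivity.
Qed.

Lemma cos_add_sin x : cos x + sin x = sqrt 2 * cos (x - PI / 4).
Proof.
  rewrite cos_minus, cos_PI4, sin_PI4. field.
  apply Rgt_not_eq, sqrt_lt_R0. lra.
Qed.

Definition sinusoid (p q x : R) : R := p * cos x + q * sin x.

Lemma sinusoid_add_pi p q x : sinusoid p q (x + PI) = - sinusoid p q x.
Proof. unfold sinusoid. rewrite neg_cos, neg_sin. ring. Qed.

Lemma sinusoid_opp p q x : sinusoid p q (- x) = sinusoid p (- q) x.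
Proof. unfold sinusoid. rewrite cos_neg, sin_neg. ring. Qed.

Lemma sinusoid_add p q x y :
  sinusoid p q x + sinusoid p q y = 2 * cos ((x - y) / 2) * sinusoid p q ((x + y) / 2).
Proof.
  unfold sinusoid.
  replace (p * cos x + q * sin x + (p * cos y + q * sin y))
    with (p * (cos x + cos y) + q * (sin x + sin y)) by ring.
  rewrite form1, form3. ring.
Qed.

(* A sinusoid increases from [x] to [y] as long as the midpoint lies before its crest. *)
Lemma sinusoid_le_mid a b x y : 0 <= y - x <= 2 * PI ->
  a * sin ((x + y) / 2) <= b * cos ((x + y) / 2) -> sinusoid a b x <= sinusoid a b y.
Proof.
  intros Hxy Hmid.
  assert (E : sinusoid a b y - sinusoid a b x
              = 2 * sin ((y - x) / 2) * (b * cos ((x + y) / 2) - a * sin ((x + y) / 2))).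
  { unfold sinusoid.
    replace (a * cos y + b * sin y - (a * cos x + b * sin x))
      with (a * (cos y - cos x) + b * (sin y - sin x)) by ring.
    rewrite form2, form4, (Rplus_comm y x). ring. }
  assert (0 <= sin ((y - x) / 2)) by (apply sin_ge_0; lra).
  assert (0 <= 2 * sin ((y - x) / 2) * (b * cos ((x + y) / 2) - a * sin ((x + y) / 2)))
    by (apply Rmult_le_pos; lra).
  lra.
Qed.

(** * The n-gon and its polar *)

(* [theta n t] is [t] half-steps of the n-gon: vertex [j] sits at angle [theta n (2 * j)]. *)
Definition theta (n : nat) (t : Z) : R := IZR t * PI / INR n.

(* The support function of the polar polygon in direction [theta n k]: the polar of the
   n-gon has its vertices, at radius [sec (PI / n)], in the odd half-step directions. *)
Definition polar_support (n : nat) (k : Z) : R := if Z.even k then 1 else sec (PI / INR n).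

Definition in_polar (n : nat) (p q : R) : Prop :=
  forall t : Z, sinusoid p q (theta n (2 * t)) <= 1.

Lemma theta_add n a b : theta n (a + b) = theta n a + theta n b.
Proof. unfold theta. rewrite plus_IZR. unfold Rdiv. ring. Qed.

Lemma theta_sub n a b : theta n (a - b) = theta n a - theta n b.
Proof. unfold theta. rewrite minus_IZR. unfold Rdiv. ring. Qed.

Lemma theta_opp n a : theta n (- a) = - theta n a.
Proof. unfold theta. rewrite opp_IZR. unfold Rdiv. ring. Qed.

Lemma theta_1 n : theta n 1 = PI / INR n.
Proof. unfold theta. rewrite Rmult_1_l. reflexivity. Qed.

Lemma theta_double n a : theta n (2 * a) = 2 * theta n a.
Proof. unfold theta. rewrite mult_IZR. unfold Rdiv. ring. Qed.

Lemma vertex_angle n j : 2 * INR j * PI / INR n = theta n (2 * Z.of_nat j).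
Proof. unfold theta. rewrite mult_IZR, <- INR_IZR_INZ. reflexivity. Qed.

Lemma app_vertex n a b c j : app (a, b, c) (vertex n j) =
  c + / 2 * sinusoid (2 * r_n n * a) (2 * r_n n * b) (theta n (2 * Z.of_nat j)).
Proof. unfold app, vertex, sinusoid. rewrite vertex_angle. field. Qed.

Lemma polar_support_even n k : Z.Even k -> polar_support n k = 1.
Proof. intros [q ->]. unfold polar_support. rewrite Z.even_mul. reflexivity. Qed.

Lemma polar_support_odd n k : Z.Odd k -> polar_support n k = sec (PI / INR n).
Proof. intros [q ->]. unfold polar_support. rewrite Z.even_odd. reflexivity. Qed.

Lemma polar_support_add2 n k q : polar_support n (k + 2 * q) = polar_support n k.
Proof. unfold polar_support. rewrite Z.even_add_mul_2. reflexivity. Qed.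

Lemma polar_support_same_parity n a b : Z.even a = Z.even b ->
  polar_support n a = polar_support n b.
Proof. intros E. unfold polar_support. rewrite E. reflexivity. Qed.

Definition gain (n h : nat) (t : Z) : R :=
  Rabs (cos (theta n t)) * polar_support n t
  + Rabs (sin (theta n t)) * polar_support n (t + Z.of_nat h).

Definition witness_effect (n : nat) (sigma th : R) : func3 :=
  (sigma * cos th / (2 * r_n n), sigma * sin th / (2 * r_n n), / 2).

Definition witness (n : nat) (sigma th : R) : func3 * func3 :=
  (witness_effect n sigma th, witness_effect n (- sigma) th).

Section Polygon.

Variables n h : nat.
Hypothesis n_eq : n = (2 * h)%nat.
Hypothesis n_ge4 : (4 <= n)%nat.

Lemma INR_n_pos : 0 < INR n.
Proof. apply lt_0_INR. lia. Qed.

Lemma pi_n_bounds : 0 < PI / INR n <= PI / 4.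
Proof.
  assert (H4 : 4 <= INR n) by (replace 4 with (INR 4) by (simpl; ring); apply le_INR, n_ge4).
  pose proof PI_RGT_0. split.
  - apply Rdiv_lt_0_compat; lra.
  - apply Rmult_le_compat_l; [lra|]. apply Rinv_le_contravar; lra.
Qed.

Lemma cos_pi_n_pos : 0 < cos (PI / INR n).
Proof. pose proof pi_n_bounds. pose proof PI_RGT_0. apply cos_gt_0; lra. Qed.

Lemma sec_pi_n_ge1 : 1 <= sec (PI / INR n).
Proof.
  pose proof cos_pi_n_pos. pose proof (COS_bound (PI / INR n)). unfold sec.
  apply (Rmult_le_reg_l (cos (PI / INR n))); [lra|]. rewrite Rinv_r; lra.
Qed.

Lemma r_n_pos : 0 < r_n n.
Proof. apply sqrt_lt_R0, Rinv_0_lt_compat, cos_pi_n_pos. Qed.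

Lemma theta_n : theta n (Z.of_nat n) = PI.
Proof. pose proof INR_n_pos. unfold theta. rewrite <- INR_IZR_INZ. field. lra. Qed.

Lemma theta_h : theta n (Z.of_nat h) = PI / 2.
Proof.
  pose proof INR_n_pos. unfold theta. rewrite <- INR_IZR_INZ, n_eq, mult_INR in *.
  simpl. field. simpl in *. lra.
Qed.

Lemma theta_add_mul_n t k : theta n (t + Z.of_nat n * k) = theta n t + IZR k * PI.
Proof.
  pose proof INR_n_pos. rewrite theta_add. unfold theta at 2.
  rewrite mult_IZR, <- INR_IZR_INZ. field. lra.
Qed.

Lemma theta_antipode t : theta n (2 * (t + Z.of_nat h)) = theta n (2 * t) + PI.
Proof.
  replace (2 * (t + Z.of_nat h))%Z with (2 * t + Z.of_nat n * 1)%Z by lia.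
  rewrite theta_add_mul_n. ring.
Qed.

Lemma theta_le a b : (a <= b)%Z -> theta n a <= theta n b.
Proof.
  intros Hab. pose proof INR_n_pos. pose proof PI_RGT_0. unfold theta, Rdiv.
  apply Rmult_le_compat_r; [left; apply Rinv_0_lt_compat; lra|].
  apply Rmult_le_compat_r; [lra|]. apply IZR_le, Hab.
Qed.

Lemma theta_nonneg t : (0 <= t)%Z -> 0 <= theta n t.
Proof.
  intros Ht. replace 0 with (theta n 0) by (unfold theta, Rdiv; ring). apply theta_le, Ht.
Qed.

Lemma sinusoid_antipode p q t :
  sinusoid p q (theta n (2 * (t + Z.of_nat h))) = - sinusoid p q (theta n (2 * t)).
Proof. rewrite theta_antipode. apply sinusoid_add_pi. Qed.

Lemma vertex_of_angle t : exists j, (1 <= j <= n)%nat /\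
  cos (theta n (2 * Z.of_nat j)) = cos (theta n (2 * t)) /\
  sin (theta n (2 * Z.of_nat j)) = sin (theta n (2 * t)).
Proof.
  assert (exists j k, (1 <= j <= n)%nat /\ t = (Z.of_nat j + Z.of_nat n * k)%Z)
    as [j [k [Hj ->]]].
  { pose proof (Z.div_mod t (Z.of_nat n) ltac:(lia)) as Hdiv.
    pose proof (Z.mod_pos_bound t (Z.of_nat n) ltac:(lia)) as Hmod.
    destruct (Z.eq_dec (t mod Z.of_nat n) 0) as [E|E].
    - exists n, (t / Z.of_nat n - 1)%Z. split; [lia|]. nia.
    - exists (Z.to_nat (t mod Z.of_nat n)), (t / Z.of_nat n)%Z. split; lia. }
  exists j. split; [exact Hj|].
  replace (2 * (Z.of_nat j + Z.of_nat n * k))%Z with (2 * Z.of_nat j + Z.of_nat n * (2 * k))%Z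
    by ring.
  rewrite theta_add_mul_n, mult_IZR, cos_period_Z, sin_period_Z. split; reflexivity.
Qed.

Lemma in_polar_of_effect a b c :
  is_effect n (a, b, c) -> in_polar n (2 * r_n n * a) (2 * r_n n * b).
Proof.
  intros He t.
  destruct (vertex_of_angle t) as [j [Hj [Cj Sj]]].
  destruct (vertex_of_angle (t + Z.of_nat h)) as [j' [Hj' [Cj' Sj']]].
  pose proof (He _ (inS_vertex n j Hj)) as Hv. pose proof (He _ (inS_vertex n j' Hj')) as Hv'.
  rewrite app_vertex in Hv, Hv'. unfold sinusoid in Hv, Hv'.
  rewrite Cj, Sj in Hv. rewrite Cj', Sj', theta_antipode, neg_cos, neg_sin in Hv'.
  unfold sinusoid. lra.
Qed.

Lemma in_polar_support p q k :
  in_polar n p q -> Rabs (sinusoid p q (theta n k)) <= polar_support n k.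
Proof.
  intros Hp.
  assert (Hv : forall t, Rabs (sinusoid p q (theta n (2 * t))) <= 1).
  { intros t. pose proof (Hp t). pose proof (Hp (t + Z.of_nat h)%Z) as Ht.
    rewrite sinusoid_antipode in Ht. apply Rabs_le. lra. }
  destruct (Z.Even_or_Odd k) as [[t ->]|[t ->]].
  - rewrite polar_support_even by (exists t; reflexivity). apply Hv.
  - rewrite polar_support_odd by (exists t; reflexivity).
    (* an odd half-step direction bisects two adjacent vertex directions *)
    pose proof (sinusoid_add p q (theta n (2 * (t + 1))) (theta n (2 * t))) as E.
    pose proof INR_n_pos as Hn.
    replace ((theta n (2 * (t + 1)) - theta n (2 * t)) / 2) with (PI / INR n) in E
      by (unfold theta; rewrite !mult_IZR, plus_IZR; field; lra).
    replace ((theta n (2 * (t + 1)) + theta n (2 * t)) / 2) with (theta n (2 * t + 1)) in E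
      by (unfold theta; rewrite !plus_IZR, !mult_IZR, !plus_IZR; field; lra).
    pose proof cos_pi_n_pos as Hc.
    pose proof (proj1 (Rabs_le_between _ _) (Hv (t + 1)%Z)).
    pose proof (proj1 (Rabs_le_between _ _) (Hv t)).
    assert (Hm : Rabs (cos (PI / INR n) * sinusoid p q (theta n (2 * t + 1))) <= 1)
      by (apply Rabs_le; lra).
    rewrite Rabs_mult, (Rabs_pos_eq (cos _)) in Hm by lra.
    unfold sec. apply (Rmult_le_reg_l (cos (PI / INR n))); [exact Hc|].
    rewrite Rinv_r by lra. exact Hm.
Qed.

Lemma in_polar_pair_le p q i j : in_polar n p q ->
  sinusoid p q (theta n (2 * i)) + sinusoid p q (theta n (2 * j))
  <= 2 * Rabs (cos (theta n (i - j))) * polar_support n (i + j).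
Proof.
  intros Hp. rewrite sinusoid_add, !theta_double, <- Rmult_minus_distr_l,
    <- Rmult_plus_distr_l, <- theta_sub, <- theta_add.
  replace (2 * theta n (i - j) / 2) with (theta n (i - j)) by field.
  replace (2 * theta n (i + j) / 2) with (theta n (i + j)) by field.
  pose proof (in_polar_support p q (i + j) Hp) as Hs.
  pose proof (Rle_abs (cos (theta n (i - j)) * sinusoid p q (theta n (i + j)))) as Ha.
  rewrite Rabs_mult in Ha.
  pose proof (Rmult_le_compat_l _ _ _ (Rabs_pos (cos (theta n (i - j)))) Hs).
  lra.
Qed.

(* Since [theta n h = PI / 2], the second pair is controlled by a sine instead of a cosine. *)
Lemma in_polar_quad_le p1 q1 p2 q2 i j : in_polar n p1 q1 -> in_polar n p2 q2 ->
  sinusoid p1 q1 (theta n (2 * i)) + sinusoid p1 q1 (theta n (2 * j))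
  + sinusoid p2 q2 (theta n (2 * i)) + sinusoid p2 q2 (theta n (2 * (j + Z.of_nat h)))
  <= 2 * gain n h (i - j).
Proof.
  intros H1 H2.
  pose proof (in_polar_pair_le p1 q1 i j H1) as A.
  pose proof (in_polar_pair_le p2 q2 i (j + Z.of_nat h) H2) as B.
  replace (i - (j + Z.of_nat h))%Z with (- (Z.of_nat h - (i - j)))%Z in B by ring.
  rewrite theta_opp, cos_neg, theta_sub, theta_h, cos_shift in B.
  replace (i + j)%Z with (i - j + 2 * j)%Z in A by ring.
  replace (i + (j + Z.of_nat h))%Z with (i - j + Z.of_nat h + 2 * j)%Z in B by ring.
  rewrite polar_support_add2 in A, B.
  unfold gain. lra.
Qed.

Lemma dichotomic_polar M : dichotomic n M -> exists c p q, in_polar n p q /\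
  forall j, app (fst M) (vertex n j) = c + / 2 * sinusoid p q (theta n (2 * Z.of_nat j)) /\
            app (snd M) (vertex n j) = 1 - c - / 2 * sinusoid p q (theta n (2 * Z.of_nat j)).
Proof.
  destruct M as [[[a b] c] [[a' b'] c']]. intros [He [_ Hsum]]. cbn [fst snd fadd unit_eff] in *.
  injection Hsum as Ha Hb Hc.
  exists c, (2 * r_n n * a), (2 * r_n n * b). split; [exact (in_polar_of_effect a b c He)|].
  intros j. rewrite !app_vertex. unfold sinusoid.
  replace a' with (- a) by lra. replace b' with (- b) by lra. replace c' with (1 - c) by lra.
  split; ring.
Qed.

Lemma fnorm_add_effects e f : is_effect n e -> is_effect n f -> exists j, (1 <= j <= n)%nat /\
  fnorm n (fadd e f) = app e (vertex n j) + app f (vertex n j).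
Proof.
  intros He Hf. destruct (fnorm_attained n (fadd e f)) as [j [Hj ->]]; [lia|].
  exists j. split; [exact Hj|]. rewrite app_fadd. apply Rabs_pos_eq.
  pose proof (He _ (inS_vertex n j Hj)). pose proof (Hf _ (inS_vertex n j Hj)). lra.
Qed.

Lemma Pbar_le_gain G M1 M2 : (forall t, gain n h t <= G) ->
  dichotomic n M1 -> dichotomic n M2 -> Pbar n M1 M2 <= / 2 + G / 4.
Proof.
  intros HG D1 D2.
  destruct (dichotomic_polar M1 D1) as [c1 [p1 [q1 [P1 V1]]]].
  destruct (dichotomic_polar M2 D2) as [c2 [p2 [q2 [P2 V2]]]].
  destruct D1 as [E1 [E1' _]], D2 as [E2 [E2' _]].
  unfold Pbar.
  destruct (fnorm_add_effects _ _ E1 E2) as [ja [_ ->]].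
  destruct (fnorm_add_effects _ _ E1 E2') as [jb [_ ->]].
  destruct (fnorm_add_effects _ _ E1' E2) as [jc [_ ->]].
  destruct (fnorm_add_effects _ _ E1' E2') as [jd [_ ->]].
  rewrite (proj1 (V1 ja)), (proj1 (V2 ja)), (proj1 (V1 jb)), (proj2 (V2 jb)),
    (proj2 (V1 jc)), (proj1 (V2 jc)), (proj2 (V1 jd)), (proj2 (V2 jd)).
  pose proof (in_polar_quad_le p1 q1 p2 q2 (Z.of_nat ja) (Z.of_nat jb) P1 P2) as Q1.
  pose proof (in_polar_quad_le p1 q1 p2 q2 (Z.of_nat jd + Z.of_nat h) (Z.of_nat jc + Z.of_nat h)
    P1 P2) as Q2.
  rewrite !sinusoid_antipode in Q1. rewrite !sinusoid_antipode in Q2.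
  pose proof (HG (Z.of_nat ja - Z.of_nat jb)%Z).
  pose proof (HG (Z.of_nat jd + Z.of_nat h - (Z.of_nat jc + Z.of_nat h))%Z).
  lra.
Qed.

Lemma app_witness_effect sigma th j :
  app (witness_effect n sigma th) (vertex n j)
  = / 2 + sigma / 2 * cos (theta n (2 * Z.of_nat j) - th).
Proof.
  pose proof r_n_pos. unfold app, witness_effect, vertex.
  rewrite vertex_angle, cos_minus. field. lra.
Qed.

Lemma dichotomic_witness sigma th :
  (forall j, (1 <= j <= n)%nat -> Rabs (sigma * cos (theta n (2 * Z.of_nat j) - th)) <= 1) ->
  dichotomic n (witness n sigma th).
Proof.
  intros Hb. unfold dichotomic, witness; cbn [fst snd]. split; [|split].
  1, 2: apply is_effect_vertices; intros j Hj; rewrite app_witness_effect;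
    pose proof (proj1 (Rabs_le_between _ _) (Hb j Hj)); lra.
  pose proof r_n_pos. unfold fadd, witness_effect, unit_eff.
  f_equal; [f_equal|]; field; lra.
Qed.

Lemma Rabs_cos_theta_odd k : Z.Odd k -> Rabs (cos (theta n k)) <= cos (PI / INR n).
Proof.
  intros Hk.
  assert (exists r q, (1 <= r <= Z.of_nat n - 1)%Z /\ k = (r + Z.of_nat n * q)%Z)
    as [r [q [Hr ->]]].
  { pose proof (Z.div_mod k (Z.of_nat n) ltac:(lia)) as Hdiv.
    pose proof (Z.mod_pos_bound k (Z.of_nat n) ltac:(lia)) as Hmod.
    exists (k mod Z.of_nat n)%Z, (k / Z.of_nat n)%Z. split; [|lia].
    destruct Hk as [a Ha]. nia. }
  rewrite theta_add_mul_n, Rabs_cos_add_Zpi.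
  pose proof (theta_le 1 r ltac:(lia)) as Hlo.
  pose proof (theta_le r (Z.of_nat n - 1) ltac:(lia)) as Hhi.
  rewrite theta_1 in Hlo. rewrite theta_sub, theta_n, theta_1 in Hhi.
  pose proof pi_n_bounds. pose proof PI_RGT_0.
  apply Rabs_le. split.
  - pose proof (Rtrigo_facts.cos_pi_minus (theta n r)).
    assert (cos (PI - theta n r) <= cos (PI / INR n)) by (apply cos_decr_1; lra).
    lra.
  - apply cos_decr_1; lra.
Qed.

Lemma dichotomic_witness_polar k : dichotomic n (witness n (polar_support n k) (theta n k)).
Proof.
  apply dichotomic_witness. intros j _.
  destruct (Z.Even_or_Odd k) as [Ek|Ok].
  - rewrite polar_support_even, Rmult_1_l by exact Ek. apply Rabs_le, COS_bound.
  - rewrite polar_support_odd, <- theta_sub by exact Ok.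
    assert (Hodd : Z.Odd (2 * Z.of_nat j - k)).
    { destruct Ok as [a ->]. exists (Z.of_nat j - a - 1)%Z. ring. }
    pose proof (Rabs_cos_theta_odd _ Hodd). pose proof cos_pi_n_pos.
    pose proof sec_pi_n_ge1. unfold sec in *.
    rewrite Rabs_mult, Rabs_pos_eq by lra.
    apply (Rmult_le_reg_l (cos (PI / INR n))); [lra|].
    rewrite <- Rmult_assoc, Rinv_r by lra. lra.
Qed.

Lemma app_witness_pair s1 s2 x j :
  app (fadd (witness_effect n s1 x) (witness_effect n s2 (x + PI / 2))) (vertex n j)
  = 1 + / 2 * sinusoid s1 s2 (theta n (2 * Z.of_nat j) - x).
Proof.
  rewrite app_fadd, !app_witness_effect.
  replace (theta n (2 * Z.of_nat j) - (x + PI / 2))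
    with (- (PI / 2 - (theta n (2 * Z.of_nat j) - x)))
    by ring.
  rewrite cos_neg, cos_shift. unfold sinusoid. field.
Qed.

Lemma Pbar_witness_ge s1 s2 i : (1 <= i <= h)%nat ->
  / 2 + sinusoid s1 s2 (theta n (Z.of_nat i)) / 4
  <= Pbar n (witness n s1 (theta n (Z.of_nat i)))
            (witness n s2 (theta n (Z.of_nat i) + PI / 2)).
Proof.
  intros Hi. set (x := theta n (Z.of_nat i)).
  unfold Pbar, witness; cbn [fst snd].
  pose proof (fnorm_ge_vertex n
    (fadd (witness_effect n s1 x) (witness_effect n s2 (x + PI / 2))) i ltac:(lia)) as Va.
  pose proof (fnorm_ge_vertex n
    (fadd (witness_effect n s1 x) (witness_effect n (- s2) (x + PI / 2))) n ltac:(lia)) as Vb.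
  pose proof (fnorm_ge_vertex n
    (fadd (witness_effect n (- s1) x) (witness_effect n s2 (x + PI / 2))) h ltac:(lia)) as Vc.
  pose proof (fnorm_ge_vertex n
    (fadd (witness_effect n (- s1) x) (witness_effect n (- s2) (x + PI / 2))) (i + h)
    ltac:(lia)) as Vd.
  rewrite app_witness_pair in Va, Vb, Vc, Vd.
  rewrite theta_double in Va, Vb, Vc. rewrite Nat2Z.inj_add, theta_antipode, theta_double in Vd.
  rewrite theta_n in Vb. rewrite theta_h in Vc. fold x in Va, Vd.
  replace (2 * x - x) with x in Va by ring.
  replace (2 * PI - x) with (- x + PI + PI) in Vb by ring.
  replace (2 * (PI / 2) - x) with (- x + PI) in Vc by field.
  replace (2 * x + PI - x) with (x + PI) in Vd by ring.
  rewrite !sinusoid_add_pi, sinusoid_opp in Vb. rewrite sinusoid_add_pi, sinusoid_opp in Vc.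
  rewrite sinusoid_add_pi in Vd.
  unfold sinusoid in *.
  set (V := 1 + / 2 * (s1 * cos x + s2 * sin x)) in Va.
  replace (1 + / 2 * - - (s1 * cos x + - - s2 * sin x)) with V in Vb by (unfold V; ring).
  replace (1 + / 2 * - (- s1 * cos x + - s2 * sin x)) with V in Vc, Vd by (unfold V; ring).
  pose proof (Rle_abs V). unfold V in *. lra.
Qed.

Lemma gain_at t : (0 <= t <= Z.of_nat h)%Z ->
  gain n h t = sinusoid (polar_support n t) (polar_support n (t + Z.of_nat h)) (theta n t).
Proof.
  intros Ht. pose proof (theta_nonneg t ltac:(lia)) as Hlo.
  pose proof (theta_le t (Z.of_nat h) ltac:(lia)) as Hhi. rewrite theta_h in Hhi.
  pose proof PI_RGT_0.
  unfold gain, sinusoid. rewrite !Rabs_pos_eq; [ring|apply sin_ge_0|apply cos_ge_0]; lra.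
Qed.

Lemma is_Pbar_max_gain i : (1 <= i <= h)%nat ->
  (forall t, gain n h t <= gain n h (Z.of_nat i)) ->
  is_Pbar_max n (/ 2 + gain n h (Z.of_nat i) / 4).
Proof.
  intros Hi Hmax.
  set (M1 := witness n (polar_support n (Z.of_nat i)) (theta n (Z.of_nat i))).
  set (M2 := witness n (polar_support n (Z.of_nat i + Z.of_nat h)) (theta n (Z.of_nat i) + PI / 2)).
  assert (D1 : dichotomic n M1) by apply dichotomic_witness_polar.
  assert (D2 : dichotomic n M2).
  { unfold M2. rewrite <- theta_h, <- theta_add. apply dichotomic_witness_polar. }
  assert (Hge : / 2 + gain n h (Z.of_nat i) / 4 <= Pbar n M1 M2).
  { rewrite gain_at by lia. apply Pbar_witness_ge, Hi. }
  split.
  - exists M1, M2. split; [exact D1|split; [exact D2|]].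
    apply Rle_antisym; [apply Pbar_le_gain|]; assumption.
  - intros M1' M2'. apply Pbar_le_gain, Hmax.
Qed.

Lemma gain_period t q : gain n h (t + Z.of_nat n * q) = gain n h t.
Proof.
  unfold gain. rewrite theta_add_mul_n, Rabs_cos_add_Zpi, Rabs_sin_add_Zpi.
  replace (t + Z.of_nat n * q)%Z with (t + 2 * (Z.of_nat h * q))%Z by lia.
  replace (t + 2 * (Z.of_nat h * q) + Z.of_nat h)%Z
    with (t + Z.of_nat h + 2 * (Z.of_nat h * q))%Z by ring.
  rewrite !polar_support_add2. reflexivity.
Qed.

Lemma gain_opp t : gain n h (- t) = gain n h t.
Proof.
  unfold gain. rewrite theta_opp, cos_neg, sin_neg, !Rabs_Ropp.
  rewrite (polar_support_same_parity n (- t) t) by apply Z.even_opp.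
  rewrite (polar_support_same_parity n (- t + Z.of_nat h) (t + Z.of_nat h))
    by (rewrite !Z.even_add, Z.even_opp; reflexivity).
  reflexivity.
Qed.

Lemma gain_reflect t : gain n h (Z.of_nat h - t) = gain n h t.
Proof.
  unfold gain. rewrite theta_sub, theta_h, cos_shift, sin_shift.
  rewrite (polar_support_same_parity n (Z.of_nat h - t) (t + Z.of_nat h))
    by (rewrite Z.even_sub, Z.even_add; destruct (Z.even t), (Z.even (Z.of_nat h)); reflexivity).
  rewrite (polar_support_same_parity n (Z.of_nat h - t + Z.of_nat h) t)
    by (rewrite Z.even_add, Z.even_sub; destruct (Z.even t), (Z.even (Z.of_nat h)); reflexivity).
  ring.
Qed.

Lemma gain_reduce t :
  exists t', (0 <= t')%Z /\ (2 * t' <= Z.of_nat h)%Z /\ gain n h t = gain n h t'.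
Proof.
  pose proof (Z.div_mod t (Z.of_nat n) ltac:(lia)) as Hdiv.
  pose proof (Z.mod_pos_bound t (Z.of_nat n) ltac:(lia)) as Hmod.
  set (t0 := (t mod Z.of_nat n)%Z) in *.
  assert (exists t1, (0 <= t1 <= Z.of_nat h)%Z /\ gain n h t = gain n h t1) as [t1 [Ht1 E1]].
  { rewrite Hdiv, Z.add_comm, gain_period.
    destruct (Z.le_gt_cases t0 (Z.of_nat h)).
    - exists t0. split; [lia|reflexivity].
    - exists (Z.of_nat n - t0)%Z. split; [lia|].
      rewrite <- (gain_opp t0), <- (gain_period (- t0) 1). f_equal. ring. }
  destruct (Z.le_gt_cases (2 * t1) (Z.of_nat h)).
  - exists t1. split; [lia|split; [lia|exact E1]].
  - exists (Z.of_nat h - t1)%Z. split; [lia|split; [lia|]]. rewrite gain_reflect. exact E1.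
Qed.

(** * Maximising the gain *)

Lemma theta_quarter m : h = (2 * m)%nat -> theta n (Z.of_nat m) = PI / 4.
Proof.
  intros Hm. pose proof theta_h as E.
  replace (Z.of_nat h) with (2 * Z.of_nat m)%Z in E by lia.
  rewrite theta_double in E. lra.
Qed.

Lemma gain_h_even m : h = (2 * m)%nat ->
  gain n h (Z.of_nat m) = sqrt 2 * polar_support n (Z.of_nat m).
Proof.
  intros Hm. rewrite gain_at by lia.
  replace (Z.of_nat m + Z.of_nat h)%Z with (Z.of_nat m + 2 * Z.of_nat m)%Z by lia.
  rewrite polar_support_add2. unfold sinusoid.
  rewrite <- Rmult_plus_distr_l, cos_add_sin, theta_quarter, Rminus_diag, cos_0 by exact Hm.
  ring.
Qed.

Lemma gain_max_h_even m : h = (2 * m)%nat ->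
  forall t, gain n h t <= gain n h (Z.of_nat m).
Proof.
  intros Hm t. destruct (gain_reduce t) as [t' [Ht0 [Hth ->]]].
  rewrite (gain_h_even m Hm), (gain_at t') by lia.
  replace (t' + Z.of_nat h)%Z with (t' + 2 * Z.of_nat m)%Z by lia.
  rewrite polar_support_add2. unfold sinusoid. rewrite <- Rmult_plus_distr_l, cos_add_sin.
  pose proof (theta_nonneg t' Ht0) as Hlo.
  pose proof (theta_le t' (Z.of_nat m) ltac:(lia)) as Hhi. rewrite (theta_quarter m Hm) in Hhi.
  set (x := theta n t') in *.
  pose proof PI_RGT_0. pose proof pi_n_bounds. pose proof sec_pi_n_ge1. pose proof (sqrt_pos 2).
  pose proof (COS_bound (x - PI / 4)). assert (0 <= cos (x - PI / 4)) by (apply cos_ge_0; lra).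
  assert (0 <= sqrt 2 * cos (x - PI / 4) <= sqrt 2) by (split; nra).
  unfold polar_support. destruct (Z.even t') eqn:Et, (Z.even (Z.of_nat m)) eqn:Em; try nra.
  (* an odd [t'] below an even [m] stays a full half-step away from [PI / 4] *)
  assert (Hlt : (t' <= Z.of_nat m - 1)%Z).
  { destruct (Z.eq_dec t' (Z.of_nat m)) as [->|]; [congruence|lia]. }
  pose proof (theta_le t' (Z.of_nat m - 1) Hlt) as Hstep.
  rewrite theta_sub, theta_quarter, theta_1 in Hstep by exact Hm. fold x in Hstep.
  assert (cos (x - PI / 4) <= cos (PI / INR n)).
  { rewrite <- cos_neg. replace (- (x - PI / 4)) with (PI / 4 - x) by ring.
    apply cos_decr_1; lra. }
  pose proof cos_pi_n_pos. unfold sec in *.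
  assert (/ cos (PI / INR n) * cos (x - PI / 4) <= 1).
  { apply (Rmult_le_reg_l (cos (PI / INR n))); [lra|].
    rewrite <- Rmult_assoc, Rinv_r; lra. }
  nra.
Qed.

Lemma polar_support_sin_le_cos k c : 0 <= c -> 2 * c + PI / INR n <= PI / 2 ->
  polar_support n k * sin c <= polar_support n (k + 1) * cos c.
Proof.
  intros Hc0 Hc. pose proof pi_n_bounds. pose proof cos_pi_n_pos. pose proof PI_RGT_0.
  assert (Hkey : sin c <= cos (PI / INR n) * cos c).
  { pose proof (cos_shift c).
    assert (cos (PI / 2 - c) <= cos (c + PI / INR n)) by (apply cos_decr_1; lra).
    rewrite cos_plus in H3.
    assert (0 <= sin c * sin (PI / INR n)) by (apply Rmult_le_pos; apply sin_ge_0; lra).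
    lra. }
  assert (0 <= cos c) by (apply cos_ge_0; lra).
  pose proof (COS_bound (PI / INR n)). pose proof sec_pi_n_ge1.
  destruct (Z.Even_or_Odd k) as [Ek|Ok].
  - rewrite polar_support_even, polar_support_odd by (exact Ek || now apply Z.Odd_succ).
    nra.
  - rewrite polar_support_odd, polar_support_even by (exact Ok || now apply Z.Even_succ).
    unfold sec. apply (Rmult_le_reg_l (cos (PI / INR n))); [lra|].
    rewrite <- Rmult_assoc, Rinv_r; lra.
Qed.

Lemma gain_max_h_odd m : h = (2 * m + 1)%nat ->
  forall t, gain n h t <= gain n h (Z.of_nat m).
Proof.
  intros Hm t. destruct (gain_reduce t) as [t' [Ht0 [Hth ->]]].
  assert (Hadj : forall k, (0 <= k <= Z.of_nat h)%Z ->
    gain n h k = sinusoid (polar_support n k) (polar_support n (k + 1)) (theta n k)).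
  { intros k Hk. rewrite gain_at by exact Hk.
    replace (k + Z.of_nat h)%Z with (k + 1 + 2 * Z.of_nat m)%Z by lia.
    rewrite polar_support_add2. reflexivity. }
  (* compare [t'] with whichever of [m] and [m + 1 = h - m] has its parity *)
  assert (exists u, (t' <= u <= Z.of_nat h)%Z /\ (t' + u <= 2 * Z.of_nat m)%Z /\
                    Z.even u = Z.even t' /\ gain n h u = gain n h (Z.of_nat m))
    as [u [Hu [Hsum [Hpar <-]]]].
  { destruct (Bool.bool_dec (Z.even t') (Z.even (Z.of_nat m))) as [E|E].
    - exists (Z.of_nat m). repeat split; [lia|lia|lia|congruence].
    - assert (t' <> Z.of_nat m) by (intros ->; congruence).
      exists (Z.of_nat m + 1)%Z. repeat split; [lia|lia|lia| |].
      + rewrite Z.even_add. destruct (Z.even t'), (Z.even (Z.of_nat m)); simpl in *; congruence.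
      + rewrite <- gain_reflect. f_equal. lia. }
  rewrite !Hadj by lia.
  rewrite (polar_support_same_parity n u t' Hpar),
    (polar_support_same_parity n (u + 1) (t' + 1)) by (rewrite !Z.even_add, Hpar; reflexivity).
  pose proof (theta_nonneg t' Ht0) as Hlo. pose proof (theta_le u (Z.of_nat h) ltac:(lia)) as Hhi.
  pose proof (theta_le t' u ltac:(lia)) as Hmono.
  pose proof (theta_le (t' + u) (Z.of_nat h - 1) ltac:(lia)) as Hmid.
  rewrite theta_h in Hhi. rewrite theta_add, theta_sub, theta_h, theta_1 in Hmid.
  pose proof PI_RGT_0.
  apply sinusoid_le_mid; [lra|]. apply polar_support_sin_le_cos; lra.
Qed.

Lemma is_Pbar_max_h_even m : h = (2 * m)%nat ->
  is_Pbar_max n (/ 2 * (1 + polar_support n (Z.of_nat m) / sqrt 2)).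
Proof.
  intros Hm.
  replace (/ 2 * (1 + polar_support n (Z.of_nat m) / sqrt 2))
    with (/ 2 + gain n h (Z.of_nat m) / 4).
  - apply is_Pbar_max_gain; [lia|]. apply gain_max_h_even, Hm.
  - rewrite gain_h_even by exact Hm.
    pose proof (sqrt_lt_R0 2 ltac:(lra)).
    field_simplify_eq; [rewrite <- Rsqr_pow2, Rsqr_sqrt by lra; ring|lra].
Qed.

Lemma is_Pbar_max_h_odd m : h = (2 * m + 1)%nat ->
  is_Pbar_max n (/ 4 * (2 + polar_support n (Z.of_nat m) * cos (theta n (Z.of_nat m))
                          + polar_support n (Z.of_nat m + 1) * sin (theta n (Z.of_nat m)))).
Proof.
  intros Hm.
  replace (/ 4 * _) with (/ 2 + gain n h (Z.of_nat m) / 4).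
  - apply is_Pbar_max_gain; [lia|]. apply gain_max_h_odd, Hm.
  - rewrite gain_at by lia.
    replace (Z.of_nat m + Z.of_nat h)%Z with (Z.of_nat m + 1 + 2 * Z.of_nat m)%Z by lia.
    rewrite polar_support_add2. unfold sinusoid. field.
Qed.

End Polygon.

Theorem mainTheorem15 (n : nat) (Hev : Nat.Even n) (H4 : (4 <= n)%nat) :
  forall m : nat, (1 <= m)%nat ->
  (n = (4 * m)%nat -> Nat.Odd m ->
     is_Pbar_max n (/ 2 * (1 + sec (PI / INR n) / sqrt 2))) /\
  (n = (4 * m)%nat -> Nat.Even m ->
     is_Pbar_max n (/ 2 * (1 + 1 / sqrt 2))) /\
  (n = (4 * m + 2)%nat -> Nat.Odd m ->
     is_Pbar_max n (/ 4 * (2 + sec (PI / INR n) * cos (INR m * PI / INR n)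
                              + sin (INR m * PI / INR n)))) /\
  (n = (4 * m + 2)%nat -> Nat.Even m ->
     is_Pbar_max n (/ 4 * (2 + cos (INR m * PI / INR n)
                              + sec (PI / INR n) * sin (INR m * PI / INR n)))).
Proof.
  intros m _.
  assert (Hodd : forall k, Nat.Odd k -> Z.Odd (Z.of_nat k) /\ Z.Even (Z.of_nat k + 1))
    by (intros k [a ->]; split; [exists (Z.of_nat a)|exists (Z.of_nat a + 1)%Z]; lia).
  assert (Heven : forall k, Nat.Even k -> Z.Even (Z.of_nat k) /\ Z.Odd (Z.of_nat k + 1))
    by (intros k [a ->]; split; [exists (Z.of_nat a)|exists (Z.of_nat a)]; lia).
  assert (Htheta : theta n (Z.of_nat m) = INR m * PI / INR n)
    by (unfold theta; rewrite <- INR_IZR_INZ; reflexivity).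
  split; [|split; [|split]]; intros Hnm Hm.
  - rewrite <- (polar_support_odd n _ (proj1 (Hodd m Hm))).
    apply (is_Pbar_max_h_even n (2 * m)); lia.
  - rewrite <- (polar_support_even n _ (proj1 (Heven m Hm))) at 2.
    apply (is_Pbar_max_h_even n (2 * m)); lia.
  - destruct (Hodd m Hm) as [Om Em1].
    pose proof (is_Pbar_max_h_odd n (2 * m + 1) ltac:(lia) H4 m ltac:(lia)) as Hmax.
    rewrite (polar_support_odd n _ Om), (polar_support_even n _ Em1), Rmult_1_l, Htheta in Hmax.
    exact Hmax.
  - destruct (Heven m Hm) as [Em Om1].
    pose proof (is_Pbar_max_h_odd n (2 * m + 1) ltac:(lia) H4 m ltac:(lia)) as Hmax.
    rewrite (polar_support_even n _ Em), (polar_support_odd n _ Om1), Rmult_1_l, Htheta in Hmax.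
    exact Hmax.
Qed.
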